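(* Let $\mathbb{F}$ be a field with $\mathrm{char}(\mathbb{F})\neq 2,3$. Every proper ideal of $\hat{\mathcal{H}}$ is contained in the radical $R(\hat{\mathcal{H}})$; in particular, no proper ideal of $\hat{\mathcal{H}}$ contains any of the axes $a_i$, $i\in\mathbb{Z}$.
   Context: Notation: $\mathbb{N}=\{1,2,3,\dots\}$, $3\mathbb{N}=\{3,6,9,\dots\}$; for $r\in\mathbb{Z}$, $\bar r=r+3\mathbb{Z}\in\mathbb{Z}_3$. The algebra $\hat{\mathcal{H}}$ is the commutative $\mathbb{F}$-algebra with basis $\{a_i:i\in\mathbb{Z}\}\cup\{s_j:j\in\mathbb{N}\}\cup\{p_{\bar r,k}:\bar r\in\{\bar1,\bar2\},\ k\in 3\mathbb{N}\}$, where $s_0=0$, $p_{\bar r,j}=0$ for all $\bar r$ whenever $j\notin 3\mathbb{N}$, $p_{\bar 0,j}=-p_{\bar1,j}-p_{\bar2,j}$, $z_{\bar r,j}=p_{\bar r+\bar1,j}-p_{\bar r-\bar1,j}$, and for $i,i'\in\mathbb{Z}$, $j,l\in\mathbb{N}$, $h,k\in3\mathbb{N}$, $\bar r,\bar t\in\mathbb{Z}_3$: (H1) $a_ia_{i'}=\tfrac12(a_i+a_{i'})+s_{|i-i'|}+z_{\bar\imath,|i-i'|}$; (H2) $a_is_j=-\tfrac34a_i+\tfrac38(a_{i-j}+a_{i+j})+\tfrac32 s_j-z_{\bar\imath,j}$; (H3) $a_ip_{\bar r,k}=\tfrac32p_{\bar r,k}-p_{-(\bar\imath+\bar r),k}$;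 (H4) $s_js_l=\tfrac34(s_j+s_l)-\tfrac38(s_{|j-l|}+s_{j+l})$; (H5) $s_jp_{\bar r,k}=\tfrac34(p_{\bar r,j}+p_{\bar r,k})-\tfrac38(p_{\bar r,|j-k|}+p_{\bar r,j+k})$; (H6) $p_{\bar r,h}p_{\bar t,k}=\tfrac14(z_{-(\bar r+\bar t),h}+z_{-(\bar r+\bar t),k})-\tfrac18(z_{-(\bar r+\bar t),|h-k|}+z_{-(\bar r+\bar t),h+k})$. The $a_i$ are the axes of $\hat{\mathcal{H}}$. The radical $R(\hat{\mathcal{H}})$ is the unique largest ideal of $\hat{\mathcal{H}}$ containing none of the axes $a_i$. *)

(* The algebra \hat{H} over a field F, presented concretely:
   elements are F-valued coefficient functions on the basis index type
   [basis] that arise as finite linear combinations [lc l] of basis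
   elements; the product is the bilinear extension of the table (H1)-(H6). *)
From HB Require Import structures.
From mathcomp Require Import all_boot all_order all_algebra.
Set Implicit Arguments. Unset Strict Implicit. Unset Printing Implicit Defensive.
Import Order.TTheory GRing.Theory Num.Theory.
Local Open Scope ring_scope.

(* Basis indices:
     inl (inl i)        ~ a_i            (i : int)
     inl (inr j)        ~ s_(j+1)        (so j ranges over N = {1,2,...})
     inr (false, k)     ~ p_(1bar, 3(k+1))
     inr (true,  k)     ~ p_(2bar, 3(k+1))  (so k ranges over 3N) *)
Definition basis : Type := ((int + nat) + (bool * nat))%type.

Definition bA (i : int) : basis := inl (inl i).
Definition bS (j : nat) : basis := inl (inr j).
Definition bP (r : bool) (k : nat) : basis := inr (r, k).

Section Hhat.
Variable F : fieldType.

Definition fsum := seq (F * basis).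

Definition lc (l : fsum) : basis -> F :=
  fun b => \sum_(x <- l) (if x.2 == b then x.1 else 0).

Definition scl (c : F) (l : fsum) : fsum := [seq (c * x.1, x.2) | x <- l].

Definition half : F := (2%:R)^-1.

Definition av (i : int) : fsum := [:: (1, bA i)].
(* s_j for j : nat, with s_0 = 0 *)
Definition sv (j : nat) : fsum := if j is j'.+1 then [:: (1, bS j')] else [::].
(* p_{rbar, j} for r : int, j : nat; zero unless j in 3N;
   p_{0bar,j} = - p_{1bar,j} - p_{2bar,j} *)
Definition pv (r : int) (j : nat) : fsum :=
  if (0 < j)%N && (3 %| j)%N then
    let k := (j %/ 3).-1 in
    match absz (r %% 3)%Z with
    | 0%N => [:: (-1, bP false k); (-1, bP true k)]
    | 1%N => [:: (1, bP false k)]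
    | _ => [:: (1, bP true k)]
    end
  else [::].
Definition zv (r : int) (j : nat) : fsum := pv (r + 1) j ++ scl (-1) (pv (r - 1) j).

Definition mulB (x y : basis) : fsum :=
  match x, y with
  | inl (inl i), inl (inl i') =>
      scl half (av i ++ av i') ++ sv (absz (i - i')) ++ zv i (absz (i - i'))
  | inl (inl i), inl (inr j') | inl (inr j'), inl (inl i) =>
      let j := j'.+1 in
      scl (- (3%:R / 4%:R)) (av i)
      ++ scl (3%:R / 8%:R) (av (i - j%:Z) ++ av (i + j%:Z))
      ++ scl (3%:R / 2%:R) (sv j) ++ scl (-1) (zv i j)
  | inl (inl i), inr (rb, k') | inr (rb, k'), inl (inl i) =>
      let r : int := if rb then 2 else 1 in
      let k := (3 * k'.+1)%N in
      scl (3%:R / 2%:R) (pv r k) ++ scl (-1) (pv (- (i + r)) k)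
  | inl (inr j'), inl (inr l') =>
      let j := j'.+1 in let l := l'.+1 in
      scl (3%:R / 4%:R) (sv j ++ sv l)
      ++ scl (- (3%:R / 8%:R)) (sv (absz (j%:Z - l%:Z)) ++ sv (j + l))
  | inl (inr j'), inr (rb, k') | inr (rb, k'), inl (inr j') =>
      let j := j'.+1 in
      let r : int := if rb then 2 else 1 in
      let k := (3 * k'.+1)%N in
      scl (3%:R / 4%:R) (pv r j ++ pv r k)
      ++ scl (- (3%:R / 8%:R)) (pv r (absz (j%:Z - k%:Z)) ++ pv r (j + k))
  | inr (rb, h'), inr (tb, k') =>
      let r : int := if rb then 2 else 1 in
      let t : int := if tb then 2 else 1 in
      let h := (3 * h'.+1)%N in
      let k := (3 * k'.+1)%N in
      let q := - (r + t) in
      scl (4%:R)^-1 (zv q h ++ zv q k)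
      ++ scl (- (8%:R)^-1) (zv q (absz (h%:Z - k%:Z)) ++ zv q (h + k))
  end.

Definition mulL (l m : fsum) : fsum :=
  flatten [seq flatten [seq scl (x.1 * y.1) (mulB x.2 y.2) | y <- m] | x <- l].

Definition vec := basis -> F.
Definition inH (v : vec) : Prop := exists l : fsum, v = lc l.
Definition axis (i : int) : vec := lc (av i).

(* ideals of \hat{H}: F-subspaces of \hat{H} closed under multiplication
   by arbitrary elements of \hat{H} (the algebra is commutative) *)
Definition is_idealH (I : vec -> Prop) : Prop :=
  [/\ (forall v, I v -> inH v),
      I (fun _ => 0),
      (forall u v, I u -> I v -> I (fun b => u b + v b)),
      (forall (c : F) u, I u -> I (fun b => c * u b)) &
      (forall l m : fsum, I (lc l) -> I (lc (mulL l m)))].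

Definition proper_idealH (I : vec -> Prop) : Prop :=
  is_idealH I /\ exists v, inH v /\ ~ I v.

Definition axis_free (I : vec -> Prop) : Prop := forall i : int, ~ I (axis i).

Definition is_radical (R : vec -> Prop) : Prop :=
  [/\ is_idealH R, axis_free R &
      forall J, is_idealH J -> axis_free J -> forall v, J v -> R v].

End Hhat.

(* The functional [phi] summing the coefficients of the axes is an algebra
   homomorphism onto F: in each of (H1)-(H6) the axis coefficients of the
   product sum to the product of those of the factors.  So [ker phi] is an
   ideal containing no axis.  Conversely, multiplication by a_i acts on the
   span of a_i, a_(i+d), a_(i-d), s_d, z_(i,d), and on that of p_(r,k),
   p_(-(i+r),k), with eigenvalues among 1, 0, 1/2, 2, 5/2, where only a_i has
   eigenvalue 1.  Hence for Q(x) = x(x-2)(2x-1)(2x-5), which vanishes at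
   0, 1/2, 2, 5/2 and has Q(1) = 3, the map Q(ad a_i) sends v to 3 phi(v) a_i.
   An ideal with an element outside [ker phi] thus contains every axis, hence
   every s_j + z_(k,j) = a_k a_(k+j) - (a_k + a_(k+j))/2; summing over k mod 3
   isolates 3 s_j, and then the z_(k,j) give 3 p_(r,k): the ideal is
   everything.  So [ker phi] is the radical and contains every proper ideal. *)
From Pilot Require Import Defs.
From HB Require Import structures.
From mathcomp Require Import all_boot all_order all_algebra.
From mathcomp Require Import zify ring.
From Stdlib Require Import FunctionalExtensionality.
Set Implicit Arguments. Unset Strict Implicit. Unset Printing Implicit Defensive.
Import GRing.Theory.
Local Open Scope ring_scope.

Section Hhat.

Variable F : fieldType.
Implicit Types (l m : fsum F) (c : F) (b y : basis) (i q : int).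

Lemma lc0 b : lc (F:=F) [::] b = 0.
Proof. by rewrite /lc big_nil. Qed.

Lemma lc_cons (x : F * basis) l b : lc (x :: l) b = x.1 * (x.2 == b)%:R + lc l b.
Proof. by rewrite /lc big_cons; case: eqP; rewrite ?mulr1 ?mulr0. Qed.

Lemma lc_cat l1 l2 b : lc (l1 ++ l2) b = lc l1 b + lc l2 b.
Proof. by rewrite /lc big_cat. Qed.

Lemma lc_scl c l b : lc (scl c l) b = c * lc l b.
Proof.
rewrite /lc big_map mulr_sumr; apply: eq_bigr => x _ /=.
by case: eqP; rewrite ?mulr0.
Qed.

Lemma scl_cat c l1 l2 : scl c (l1 ++ l2) = scl c l1 ++ scl c l2.
Proof. exact: map_cat. Qed.

Lemma single_scl (x : F * basis) : [:: x] = scl x.1 [:: (1, x.2)].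
Proof. by case: x => a y; rewrite /scl /= mulr1. Qed.

Lemma mulL_catl l1 l2 m : mulL (l1 ++ l2) m = mulL l1 m ++ mulL l2 m.
Proof. by rewrite /mulL map_cat flatten_cat. Qed.

Lemma mulL_scll c l m : mulL (scl c l) m = scl c (mulL l m).
Proof.
elim: l => [|x l IH] //; rewrite -cat1s scl_cat !mulL_catl IH scl_cat.
congr (_ ++ _); rewrite /mulL /= !cats0 {IH}.
elim: m => [|y m IHm] //=; rewrite IHm scl_cat; congr (_ ++ _).
by rewrite /scl -map_comp; apply: eq_map => z /=; rewrite !mulrA.
Qed.

Lemma lc_mulLl l m b :
  lc (mulL l m) b = \sum_(x <- l) x.1 * lc (mulL [:: (1, x.2)] m) b.
Proof.
elim: l => [|x l IH]; first by rewrite big_nil lc0.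
rewrite -cat1s mulL_catl lc_cat IH big_cons.
by rewrite {1}single_scl mulL_scll lc_scl.
Qed.

Lemma sum_lc_support (G : basis -> F) l (s : seq basis) :
  uniq s -> {subset map snd l <= s} ->
  \sum_(x <- l) x.1 * G x.2 = \sum_(y <- s) lc l y * G y.
Proof.
move=> s_uniq; elim: l => [|x l IH] l_s.
  by rewrite big_nil big1 // => y _; rewrite lc0 mul0r.
rewrite big_cons IH => [|y ly]; last by apply: l_s; rewrite inE ly orbT.
under [RHS]eq_bigr do rewrite lc_cons mulrDl.
rewrite big_split /=; congr (_ + _).
rewrite (bigD1_seq x.2) ?l_s ?mem_head //= eqxx mulr1.
by rewrite big1 ?addr0 // => y; rewrite eq_sym => /negbTE ->; rewrite mulr0 mul0r.
Qed.

Lemma eq_sum_lc (G : basis -> F) l l' : lc l =1 lc l' ->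
  \sum_(x <- l) x.1 * G x.2 = \sum_(x <- l') x.1 * G x.2.
Proof.
move=> ll'; have s_uniq := undup_uniq (map snd (l ++ l')).
rewrite !(sum_lc_support G s_uniq) => [|y|y]; last 2 first.
- by rewrite mem_undup map_cat mem_cat => ->; rewrite orbT.
- by rewrite mem_undup map_cat mem_cat => ->.
by apply: eq_bigr => y _; rewrite ll'.
Qed.

Lemma eq_lc_mulL l l' m : lc l =1 lc l' -> lc (mulL l m) =1 lc (mulL l' m).
Proof.
by move=> ll' b; rewrite !lc_mulLl (eq_sum_lc (fun y => lc (mulL [:: (1, y)] m) b) ll').
Qed.

Definition mulA i l := mulL l (av F i).

Lemma mulA_cat i l1 l2 : mulA i (l1 ++ l2) = mulA i l1 ++ mulA i l2.
Proof. exact: mulL_catl. Qed.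

Lemma mulA_scl i c l : mulA i (scl c l) = scl c (mulA i l).
Proof. exact: mulL_scll. Qed.

Lemma eq_lc_mulA i l l' : lc l =1 lc l' -> lc (mulA i l) =1 lc (mulA i l').
Proof. exact: eq_lc_mulL. Qed.

Lemma lc_mulA_single i c y b : lc (mulA i [:: (c, y)]) b = c * lc (mulB F y (bA i)) b.
Proof. by rewrite /mulA /mulL /= !cats0 lc_scl mulr1. Qed.

Lemma pv_mod q1 q2 k : (q1 %% 3)%Z = (q2 %% 3)%Z -> pv F q1 k = pv F q2 k.
Proof. by rewrite /pv => ->. Qed.

Lemma pv_out q k : ~~ ((0 < k)%N && (3 %| k)%N) -> pv F q k = [::].
Proof. by rewrite /pv => /negbTE ->. Qed.

Lemma pv_basis rb k : pv F (if rb then 2 else 1) (3 * k.+1) = [:: (1, bP rb k)].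
Proof. by rewrite /pv muln_gt0 dvdn_mulr //= mulKn //; case: rb. Qed.

Lemma mul3N_spec k : (0 < k)%N && (3 %| k)%N -> exists k', k = (3 * k'.+1)%N.
Proof. by case/andP => k_gt0 /dvdnP [[|k'] kE]; [lia | exists k'; lia]. Qed.

Lemma lc_pv_opp_sum q k b :
  lc (pv F q k) b = - lc (pv F (q + 1) k) b - lc (pv F (q + 2) k) b.
Proof.
have pv_res (j : int) : pv F (q + j) k = pv F ((q %% 3)%Z + j) k by apply: pv_mod; lia.
rewrite (pv_mod (q1 := q) (q2 := (q %% 3)%Z + 0)); last by lia.
rewrite !pv_res; have q_res : (q %% 3 = 0 \/ q %% 3 = 1 \/ q %% 3 = 2)%Z by lia.
by case: q_res => [->|[->|->]]; rewrite /pv /=; case: ifP => _;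
  rewrite /= ?lc_cons ?lc0 /=; ring.
Qed.

Lemma lc_mulA_bP i rb k b : lc (mulA i [:: (1, bP rb k)]) b =
  3%:R / 2%:R * lc (pv F (if rb then 2 else 1) (3 * k.+1)) b
  - lc (pv F (- (i + if rb then 2 else 1)) (3 * k.+1)) b.
Proof. by rewrite lc_mulA_single mul1r; case: rb; rewrite /= lc_cat !lc_scl mulN1r. Qed.

Lemma lc_mulA_pv i q k b :
  lc (mulA i (pv F q k)) b = 3%:R / 2%:R * lc (pv F q k) b - lc (pv F (- (i + q)) k) b.
Proof.
case/boolP: ((0 < k)%N && (3 %| k)%N) => [/mul3N_spec [k' ->] | k_out]; last first.
  by rewrite !pv_out // lc0; ring.
set K := (3 * k'.+1)%N.
have res12 q' rb : (q' %% 3 = (if rb then 2 else 1) %% 3)%Z ->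
    lc (mulA i (pv F q' K)) b =
    3%:R / 2%:R * lc (pv F q' K) b - lc (pv F (- (i + q')) K) b.
  move=> q'r; rewrite (pv_mod _ q'r) (pv_mod (q1 := - (i + q'))
    (q2 := - (i + if rb then 2 else 1))) ?[in LHS]pv_basis ?lc_mulA_bP //.
  by case: rb q'r => /=; lia.
have [q1|[q2|q0]] : (q %% 3 = 1 \/ q %% 3 = 2 \/ q %% 3 = 0)%Z by lia.
- exact: (res12 _ false).
- exact: (res12 _ true).
have pvqE : lc (pv F q K) =1 lc (scl (-1) (pv F (q + 1) K ++ pv F (q + 2) K)).
  by move=> b'; rewrite lc_scl lc_cat lc_pv_opp_sum; ring.
rewrite (eq_lc_mulA _ pvqE) mulA_scl mulA_cat lc_scl lc_cat.
rewrite (res12 _ false) ?(res12 _ true); try by rewrite /=; lia.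
rewrite pvqE lc_scl lc_cat (lc_pv_opp_sum (- (i + q))).
rewrite (pv_mod (q1 := - (i + q) + 1) (q2 := - (i + (q + 2)))); last by lia.
rewrite (pv_mod (q1 := - (i + q) + 2) (q2 := - (i + (q + 1)))); last by lia.
ring.
Qed.

Lemma lc_zv i d b : lc (zv F i d) b = lc (pv F (i + 1) d) b - lc (pv F (i - 1) d) b.
Proof. by rewrite /zv lc_cat lc_scl mulN1r. Qed.

Lemma zv_addd i (d : nat) s : s = d%:Z \/ s = - d%:Z -> zv F (i + s) d = zv F i d.
Proof.
move=> sd; case/boolP: ((0 < d)%N && (3 %| d)%N) => [/mul3N_spec [d' dE] | d_out].
  by rewrite /zv (pv_mod (q1 := i + s + 1) (q2 := i + 1))
    1?(pv_mod (q1 := i + s - 1) (q2 := i - 1)) //; lia.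
by rewrite /zv !pv_out.
Qed.

Lemma lc_mulA_av i k b : lc (mulA i (av F k)) b =
  Defs.half F * lc (av F k) b + Defs.half F * lc (av F i) b
  + lc (sv F `|k - i|) b + lc (zv F k `|k - i|) b.
Proof. by rewrite lc_mulA_single mul1r; cbn [mulB]; rewrite !lc_cat lc_scl lc_cat; ring. Qed.

Lemma lc_mulA_axis_dist i (d : nat) s b : s = d%:Z \/ s = - d%:Z ->
  lc (mulA i (av F (i + s))) b = Defs.half F * lc (av F (i + s)) b
    + Defs.half F * lc (av F i) b + lc (sv F d) b + lc (zv F i d) b.
Proof.
move=> sd; rewrite lc_mulA_av.
have -> : `|(i + s - i)%R|%N = d by case: sd => ->; lia.
by rewrite zv_addd.
Qed.

(* [Qproj i] is Q(ad a_i) for Q(x) = x(x-2)(2x-1)(2x-5) = 4x^4 - 20x^3 + 29x^2 - 10x. *)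
Definition Qproj i l : fsum F :=
  scl 4%:R (iter 4 (mulA i) l) ++ scl (- 20%:R) (iter 3 (mulA i) l)
  ++ scl 29%:R (iter 2 (mulA i) l) ++ scl (- 10%:R) (mulA i l).

Lemma eq_lc_Qproj i l l' : lc l =1 lc l' -> lc (Qproj i l) =1 lc (Qproj i l').
Proof.
have iterE n : lc l =1 lc l' -> lc (iter n (mulA i) l) =1 lc (iter n (mulA i) l').
  by elim: n => [|n IH] //= ll'; apply/eq_lc_mulA/IH.
by move=> ll' b; rewrite /Qproj !lc_cat !lc_scl !iterE // (eq_lc_mulA _ ll').
Qed.

Lemma lc_Qproj_cat i l1 l2 b :
  lc (Qproj i (l1 ++ l2)) b = lc (Qproj i l1) b + lc (Qproj i l2) b.
Proof.
have iter_cat n : iter n (mulA i) (l1 ++ l2) = iter n (mulA i) l1 ++ iter n (mulA i) l2.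
  by elim: n => //= n ->; rewrite mulA_cat.
by rewrite /Qproj !iter_cat mulA_cat !lc_cat !lc_scl !lc_cat; ring.
Qed.

Lemma lc_Qproj_scl i c l b : lc (Qproj i (scl c l)) b = c * lc (Qproj i l) b.
Proof.
have iter_scl n : iter n (mulA i) (scl c l) = scl c (iter n (mulA i) l).
  by elim: n => //= n ->; rewrite mulA_scl.
by rewrite /Qproj !iter_scl mulA_scl !lc_cat !lc_scl; ring.
Qed.

Lemma lc_Qproj_coord (T : Type) (E : T -> fsum F) (A : T -> T) i :
  (forall t, lc (mulA i (E t)) =1 lc (E (A t))) ->
  forall t b, lc (Qproj i (E t)) b =
    4%:R * lc (E (iter 4 A t)) b - 20%:R * lc (E (iter 3 A t)) b
    + 29%:R * lc (E (iter 2 A t)) b - 10%:R * lc (E (A t)) b.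
Proof.
move=> EA t b.
have iterE n : lc (iter n (mulA i) (E t)) =1 lc (E (iter n A t)).
  by elim: n => [|n IH] //= b'; rewrite (eq_lc_mulA _ IH) EA.
by rewrite /Qproj !lc_cat !lc_scl !iterE EA; ring.
Qed.

Definition comb5 i (d : nat) (t : F * F * F * F * F) : fsum F :=
  let: (t1, t2, t3, t4, t5) := t in
  scl t1 (av F i) ++ scl t2 (av F (i + d%:Z)) ++ scl t3 (av F (i - d%:Z))
  ++ scl t4 (sv F d) ++ scl t5 (zv F i d).

Definition act5 (t : F * F * F * F * F) : F * F * F * F * F :=
  let: (t1, t2, t3, t4, t5) := t in
  (t1 + Defs.half F * (t2 + t3) - 3%:R / 4%:R * t4,
   Defs.half F * t2 + 3%:R / 8%:R * t4,
   Defs.half F * t3 + 3%:R / 8%:R * t4,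
   t2 + t3 + 3%:R / 2%:R * t4,
   t2 + t3 - t4 + 5%:R / 2%:R * t5).

(* The counted rewrites stop [lc_cat] from unfolding [zv] into its [++]. *)
Lemma lc_comb5 i d t1 t2 t3 t4 t5 b : lc (comb5 i d (t1, t2, t3, t4, t5)) b =
  t1 * lc (av F i) b + t2 * lc (av F (i + d%:Z)) b + t3 * lc (av F (i - d%:Z)) b
  + t4 * lc (sv F d) b + t5 * lc (zv F i d) b.
Proof. by rewrite /comb5 4!lc_cat 5!lc_scl !addrA. Qed.

Definition comb2 i q k (t : F * F) : fsum F :=
  let: (t1, t2) := t in scl t1 (pv F q k) ++ scl t2 (pv F (- (i + q)) k).

Definition act2 (t : F * F) : F * F :=
  let: (t1, t2) := t in (3%:R / 2%:R * t1 - t2, 3%:R / 2%:R * t2 - t1).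

Lemma lc_comb2 i q k t1 t2 b : lc (comb2 i q k (t1, t2)) b =
  t1 * lc (pv F q k) b + t2 * lc (pv F (- (i + q)) k) b.
Proof. by rewrite /comb2 lc_cat !lc_scl. Qed.

Lemma lc_mulA_comb2 i q k t : lc (mulA i (comb2 i q k t)) =1 lc (comb2 i q k (act2 t)).
Proof.
case: t => t1 t2 b; rewrite /act2 lc_comb2 /comb2.
rewrite mulA_cat !mulA_scl lc_cat !lc_scl !lc_mulA_pv.
by rewrite (_ : - (i + - (i + q)) = q); ring.
Qed.

Definition isA y : F := if y is inl (inl _) then 1 else 0.

Definition phi l : F := \sum_(x <- l) x.1 * isA x.2.

Lemma eq_phi l l' : lc l =1 lc l' -> phi l = phi l'.
Proof. exact: eq_sum_lc. Qed.

Lemma phi_cat l1 l2 : phi (l1 ++ l2) = phi l1 + phi l2.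
Proof. by rewrite /phi big_cat. Qed.

Lemma phi_scl c l : phi (scl c l) = c * phi l.
Proof. by rewrite /phi big_map mulr_sumr; apply: eq_bigr => x _; rewrite mulrA. Qed.

Lemma phi_av i : phi (av F i) = 1.
Proof. by rewrite /phi big_seq1 mulr1. Qed.

Lemma phi_sv d : phi (sv F d) = 0.
Proof. by case: d => [|d]; rewrite /phi ?big_seq1 ?big_nil //= mulr0. Qed.

Lemma phi_pv q k : phi (pv F q k) = 0.
Proof.
rewrite /phi /pv; case: ifP => _; last by rewrite big_nil.
by case: (absz _) => [|[|n]]; rewrite !big_cons big_nil /= !mulr0 ?addr0.
Qed.

Lemma phi_zv q k : phi (zv F q k) = 0.
Proof. by rewrite /zv phi_cat phi_scl !phi_pv mulr0 addr0. Qed.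

Definition ker_phi : vec F -> Prop := fun v => exists l, v = lc l /\ phi l = 0.

Lemma ker_phi_axis_free : axis_free ker_phi.
Proof.
move=> i [l [il phi_l]]; move: (@eq_phi (av F i) l (fun b => congr1 (@^~ b) il)).
by rewrite phi_av phi_l => /eqP; rewrite oner_eq0.
Qed.

Section Ideal.

Variable J : vec F -> Prop.
Hypothesis J_ideal : is_idealH J.

Lemma ideal_eq_lc l l' : lc l =1 lc l' -> J (lc l) -> J (lc l').
Proof. by move=> /functional_extensionality ->. Qed.

Lemma ideal_cat l1 l2 : J (lc l1) -> J (lc l2) -> J (lc (l1 ++ l2)).
Proof.
case: J_ideal => _ _ J_add _ _ J1 J2.
by rewrite (functional_extensionality _ _ (lc_cat l1 l2)); apply: J_add.
Qed.

Lemma ideal_scl c l : J (lc l) -> J (lc (scl c l)).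
Proof.
case: J_ideal => _ _ _ J_scale _ Jl.
by rewrite (functional_extensionality _ _ (lc_scl c l)); apply: J_scale.
Qed.

Lemma ideal_mulL l m : J (lc l) -> J (lc (mulL l m)).
Proof. by case: J_ideal => _ _ _ _; apply. Qed.

Lemma ideal_Qproj i l : J (lc l) -> J (lc (Qproj i l)).
Proof.
have J_iter n : J (lc l) -> J (lc (iter n (mulA i) l)).
  by move=> Jl; elim: n => //= n; apply: ideal_mulL.
by move=> Jl; do 3 (apply: ideal_cat; first exact/ideal_scl/J_iter);
  exact/ideal_scl/ideal_mulL.
Qed.

Hypothesis J_axes : forall i, J (axis F i).

Lemma ideal_sv_zv k j : J (lc (sv F j ++ zv F k j)).
Proof.
have J_prod : J (lc (mulA (k + j%:Z) (av F k))) := ideal_mulL _ (J_axes k).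
have J_halves := ideal_scl (- Defs.half F) (ideal_cat (J_axes k) (J_axes (k + j%:Z))).
apply: ideal_eq_lc (ideal_cat J_prod J_halves) => b.
rewrite [in LHS]lc_cat lc_mulA_av (_ : `|(k - (k + j%:Z))%R|%N = j); last by lia.
by rewrite lc_scl !lc_cat; ring.
Qed.

Hypothesis three_neq0 : (3%:R : F) != 0.

Lemma ideal_sv j : J (lc (sv F j)).
Proof.
have J_sum := ideal_cat (ideal_sv_zv 0 j) (ideal_cat (ideal_sv_zv 1 j) (ideal_sv_zv 2 j)).
apply: ideal_eq_lc (ideal_scl 3%:R^-1 J_sum) => b.
rewrite lc_scl lc_cat (lc_cat (_ ++ zv F 1 j)) !(lc_cat (sv F j)) !lc_zv.
rewrite (pv_mod (q1 := 0 - 1) (q2 := 2)) // (pv_mod (q1 := 2 + 1) (q2 := 0)) //.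
by field.
Qed.

Lemma ideal_zv k j : J (lc (zv F k j)).
Proof.
apply: ideal_eq_lc (ideal_cat (ideal_sv_zv k j) (ideal_scl (-1) (ideal_sv j))) => b.
by rewrite lc_cat (lc_cat (sv F j)) lc_scl; ring.
Qed.

Lemma ideal_bP rb k : J (lc [:: (1, bP rb k)]).
Proof.
set K := (3 * k.+1)%N; rewrite -pv_basis -/K.
have J_comb c := ideal_scl 3%:R^-1 (ideal_cat (ideal_zv 1 K) (ideal_scl c (ideal_zv 0 K))).
apply: ideal_eq_lc (J_comb (if rb then -1 else 2%:R)) => b.
rewrite lc_scl lc_cat lc_scl !lc_zv (pv_mod (q1 := 0 - 1) (q2 := 2)) //.
rewrite (pv_mod (q1 := 1 - 1) (q2 := 0)) // (lc_pv_opp_sum 0).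
by case: rb; rewrite /=; field.
Qed.

Lemma ideal_full v : inH v -> J v.
Proof.
case=> l ->; elim: l => [|x l IH].
  by rewrite (functional_extensionality _ _ lc0); case: J_ideal.
rewrite -cat1s; apply: ideal_cat => //; rewrite single_scl; apply: ideal_scl.
case: x => c [[k|j]|[rb k]] /=; [exact: J_axes | exact: (ideal_sv j.+1) | exact: ideal_bP].
Qed.

End Ideal.

Section CharNot2.

Hypothesis two_neq0 : (2%:R : F) != 0.

Lemma four_neq0 : (4%:R : F) != 0.
Proof. by rewrite (_ : 4 = 2 * 2)%N // natrM mulf_neq0. Qed.

Lemma eight_neq0 : (8%:R : F) != 0.
Proof. by rewrite (_ : 8 = 2 * 4)%N // natrM mulf_neq0 // four_neq0. Qed.

Local Ltac field_char2 :=
  rewrite /Defs.half; field; by rewrite ?two_neq0 ?four_neq0 ?eight_neq0.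

Lemma lc_mulA_axis_self i b : lc (mulA i (av F i)) b = lc (av F i) b.
Proof. by rewrite lc_mulA_av subrr /= !lc0; field_char2. Qed.

Lemma lc_mulA_sv i (d : nat) b : lc (mulA i (sv F d)) b =
  - (3%:R / 4%:R) * lc (av F i) b + 3%:R / 8%:R * lc (av F (i - d%:Z)) b
  + 3%:R / 8%:R * lc (av F (i + d%:Z)) b + 3%:R / 2%:R * lc (sv F d) b
  - lc (zv F i d) b.
Proof.
case: d => [|j]; last first.
  by rewrite lc_mulA_single mul1r; cbn [mulB]; rewrite !(lc_cat, lc_scl); ring.
by rewrite ?subr0 ?addr0 /mulA /mulL /= !lc0; field_char2.
Qed.

Lemma lc_mulA_zv i d b : lc (mulA i (zv F i d)) b = 5%:R / 2%:R * lc (zv F i d) b.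
Proof.
rewrite [in RHS]lc_zv /zv mulA_cat mulA_scl lc_cat lc_scl !lc_mulA_pv.
rewrite (pv_mod (q1 := - (i + (i + 1))) (q2 := i - 1)); last by lia.
rewrite (pv_mod (q1 := - (i + (i - 1))) (q2 := i + 1)); last by lia.
field_char2.
Qed.

Lemma lc_mulA_comb5 i d t : lc (mulA i (comb5 i d t)) =1 lc (comb5 i d (act5 t)).
Proof.
case: t => [[[[t1 t2] t3] t4] t5] b; rewrite /act5 lc_comb5 /comb5.
rewrite 4!mulA_cat 5!mulA_scl 4!lc_cat 5!lc_scl lc_mulA_axis_self lc_mulA_sv lc_mulA_zv.
rewrite (lc_mulA_axis_dist _ (d := d)) ?(lc_mulA_axis_dist _ (d := d) (s := - d%:Z));
  try by [left | right].
field_char2.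
Qed.

Lemma lc_Qproj_comb5 i d t1 t2 t3 t4 t5 b :
  lc (Qproj i (comb5 i d (t1, t2, t3, t4, t5))) b = 3%:R * (t1 + t2 + t3) * lc (av F i) b.
Proof. by rewrite (lc_Qproj_coord (lc_mulA_comb5 i d)) /= !lc_comb5; field_char2. Qed.

Lemma lc_Qproj_pv i q k b : lc (Qproj i (pv F q k)) b = 0.
Proof.
have pvE : lc (pv F q k) =1 lc (comb2 i q k (1, 0)) by move=> b'; rewrite lc_comb2; ring.
rewrite (eq_lc_Qproj _ pvE) (lc_Qproj_coord (lc_mulA_comb2 i q k)) /= !lc_comb2.
field_char2.
Qed.

Lemma lc_Qproj_basis i y b : lc (Qproj i [:: (1, y)]) b = 3%:R * isA y * lc (av F i) b.
Proof.
case: y => [[k|j]|[rb k]] /=.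
- have [d [->|->]] : exists d : nat, k = i + d%:Z \/ k = i - d%:Z.
    by exists `|(k - i)%R|%N; lia.
  + rewrite (eq_lc_Qproj i (l' := comb5 i d (0, 1, 0, 0, 0))) ?lc_Qproj_comb5; first ring.
    by move=> b'; rewrite lc_comb5 /av; ring.
  + rewrite (eq_lc_Qproj i (l' := comb5 i d (0, 0, 1, 0, 0))) ?lc_Qproj_comb5; first ring.
    by move=> b'; rewrite lc_comb5 /av; ring.
- rewrite (eq_lc_Qproj i (l' := comb5 i j.+1 (0, 0, 0, 1, 0))) ?lc_Qproj_comb5; first ring.
  by move=> b'; rewrite lc_comb5; ring.
- by rewrite -pv_basis lc_Qproj_pv; ring.
Qed.

Lemma lc_Qproj i l b : lc (Qproj i l) b = 3%:R * phi l * lc (av F i) b.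
Proof.
elim: l => [|x l IH]; first by rewrite /phi big_nil /Qproj /= !lc0; ring.
rewrite -cat1s lc_Qproj_cat phi_cat IH single_scl lc_Qproj_scl lc_Qproj_basis.
by rewrite /phi big_seq1 /=; ring.
Qed.

Lemma phi_mulB y y' : phi (mulB F y y') = isA y * isA y'.
Proof.
by case: y => [[k|j]|[rb k]]; case: y' => [[k'|j']|[rb' k']]; cbn [mulB isA];
  rewrite !(phi_cat, phi_scl, phi_av, phi_sv, phi_pv, phi_zv); field_char2.
Qed.

Lemma phi_mulL l m : phi (mulL l m) = phi l * phi m.
Proof.
elim: l => [|x l IH]; first by rewrite /phi !big_nil mul0r.
rewrite -cat1s mulL_catl phi_cat IH phi_cat mulrDl; congr (_ + _).
rewrite /mulL /= cats0 {IH}; elim: m => [|y m IHm]; first by rewrite /phi !big_nil mulr0.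
rewrite /= !phi_cat phi_scl phi_mulB IHm /phi !big_cons !big_nil /=; ring.
Qed.

Lemma ker_phi_ideal : is_idealH ker_phi.
Proof.
split.
- by move=> v [l [-> _]]; exists l.
- exists [::]; split; last by rewrite /phi big_nil.
  by apply: functional_extensionality => b; rewrite lc0.
- move=> u v [l1 [-> phi1]] [l2 [-> phi2]]; exists (l1 ++ l2).
  by rewrite phi_cat phi1 phi2 addr0 (functional_extensionality _ _ (lc_cat l1 l2)).
- move=> c u [l [-> phi_l]]; exists (scl c l).
  by rewrite phi_scl phi_l mulr0 (functional_extensionality _ _ (lc_scl c l)).
- move=> l m [l' [ll' phi_l']]; exists (mulL l m); split => //.
  by rewrite phi_mulL (@eq_phi l l') ?phi_l' ?mul0r // => b; rewrite ll'.
Qed.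

Hypothesis three_neq0 : (3%:R : F) != 0.

Lemma ideal_axis J l i : is_idealH J -> J (lc l) -> phi l != 0 -> J (axis F i).
Proof.
move=> J_ideal Jl phi_l.
apply: ideal_eq_lc (ideal_scl J_ideal (3%:R * phi l)^-1 (ideal_Qproj J_ideal i Jl)) => b.
by rewrite lc_scl lc_Qproj mulrA mulVf ?mul1r // mulf_neq0.
Qed.

Lemma ideal_sub_ker_phi J : is_idealH J -> ~ (forall i, J (axis F i)) ->
  forall v, J v -> ker_phi v.
Proof.
move=> J_ideal not_axes v Jv.
have [l vE] : inH v by case: J_ideal => J_in _ _ _ _; apply: J_in.
have [phi_l0|phi_l] := eqVneq (phi l) 0; first by exists l.
by case: not_axes => i; apply: (ideal_axis (l := l)); rewrite -?vE.
Qed.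

End CharNot2.

End Hhat.

Theorem corollary5p3 (F : fieldType)
  (h2 : (2%:R : F) != 0) (h3 : (3%:R : F) != 0) :
  exists R : vec F -> Prop,
    is_radical R /\
    forall J : vec F -> Prop, proper_idealH J ->
      (forall v, J v -> R v) /\ axis_free J.
Proof.
exists (@ker_phi F); split.
  split; [exact: ker_phi_ideal | exact: ker_phi_axis_free |].
  move=> J J_ideal J_free; apply: ideal_sub_ker_phi => // J_axes.
  exact: (J_free 0).
move=> J [J_ideal [w [w_in w_notin]]].
have J_sub : forall v, J v -> ker_phi v.
  apply: ideal_sub_ker_phi => // J_axes.
  exact/w_notin/(ideal_full J_ideal J_axes h3).
by split => // i /J_sub; apply: ker_phi_axis_free.
Qed.
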